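(* Let $\Gamma$ be a connected $k$-regular highly-regular graph with CAM $C=[c_{i,j}]_{1\le i,j\le m}$ and diameter $D=\operatorname{diam}(\Gamma)\ge1$, with chosen partitions $V_1(u)=\{u\},\dots,V_m(u)$ for each vertex $u$. Let $S_0,\dots,S_D$ be nonempty subsets of $\{1,\dots,m\}$ such that $D_i(u)=\bigsqcup_{t\in S_i}V_t(u)$ for every vertex $u$ and every $i$ (such subsets always exist). For $i\in\{1,\dots,D\}$ define $b_{i-1}^{\max}=\max\{\sum_{t\in S_i}c_{t,l}: l\in S_{i-1}\}$ and $c_i^{\min}=\min\{\sum_{t\in S_{i-1}}c_{t,l}: l\in S_i\}$. Then (1) $k=b_0^{\max}\ge b_1^{\max}\ge\cdots\ge b_{D-1}^{\max}\ge1$; (2) $1=c_1^{\min}\le c_2^{\min}\le\cdots\le c_D^{\min}\le k$.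
   Context: All graphs are finite, simple; $d(u,v)$ is graph distance and $D_i(u)=\{v:d(u,v)=i\}$. A graph $\Gamma$ of order $n$ is highly-regular with collapsed adjacency matrix (CAM) $C=[c_{i,j}]_{1\le i,j\le m}$, where $2\le m<n$ (the value $m=n$ is allowed only when $n=2$), if for every vertex $u$ there is a partition of $V(\Gamma)$ into nonempty sets $V_1(u)=\{u\},V_2(u),\dots,V_m(u)$ such that for all $i,j$, every vertex $y\in V_j(u)$ is adjacent to exactly $c_{i,j}$ vertices of $V_i(u)$. *)

From mathcomp Require Import all_boot.
Set Implicit Arguments. Unset Strict Implicit. Unset Printing Implicit Defensive.

Section Graphs.
Variable T : finType.

Definition simple_graph (e : rel T) : Prop :=
  symmetric e /\ irreflexive e.

(* reach e n u v : there is a walk of length at most n from u to v,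
   i.e. d(u,v) <= n. *)
Fixpoint reach (e : rel T) (n : nat) (u v : T) : bool :=
  match n with
  | 0 => u == v
  | n'.+1 => reach e n' u v || [exists w, reach e n' u w && e w v]
  end.

(* v \in D_i(u), i.e. d(u,v) = i. *)
Definition distD (e : rel T) (i : nat) (u v : T) : bool :=
  reach e i u v && (if i is j.+1 then ~~ reach e j u v else true).

Definition connected_graph (e : rel T) : Prop :=
  forall u v : T, connect e u v.

Definition k_regular (e : rel T) (k : nat) : Prop :=
  forall u : T, #|[set v | e u v]| = k.

Definition is_diameter (e : rel T) (D : nat) : Prop :=
  (forall u v : T, reach e D u v) /\ (exists u v : T, distD e D u v).

(* Highly-regular with CAM c (indices 1..m of the paper are the ordinals
   0..m-1 here) and chosen partitions: P u v = t  means  v \in V_{t+1}(u). *)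
Definition highly_regular_with (e : rel T) (m : nat)
    (c : 'I_m -> 'I_m -> nat) (P : T -> T -> 'I_m) : Prop :=
  [/\ (2 <= m < #|T|) \/ (m = 2 /\ #|T| = 2),
      (forall u v : T, (nat_of_ord (P u v) == 0) = (v == u)),
      (forall (u : T) (t : 'I_m), exists v : T, P u v = t) &
      (forall (u y : T) (i : 'I_m),
          #|[set x | e x y && (P u x == i)]| = c i (P u y))].

Definition bmax m (c : 'I_m -> 'I_m -> nat) (S : nat -> {set 'I_m}) (j : nat) : nat :=
  \max_(l in S j) \sum_(t in S j.+1) c t l.

(* c_i^min = min { sum_{t in S_{i-1}} c_{t,l} : l in S_i }  (minimum over a
   set; the unit of the fold is the maximum, which is >= every member, so for
   nonempty S_i this is exactly the minimum). *)
Definition cmin m (c : 'I_m -> 'I_m -> nat) (S : nat -> {set 'I_m}) (i : nat) : nat :=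
  \big[minn/ \max_(l in S i) \sum_(t in S i.-1) c t l]_(l in S i)
     \sum_(t in S i.-1) c t l.

End Graphs.

From mathcomp Require Import all_boot.
Set Implicit Arguments. Unset Strict Implicit.

(* The CAM turns \sum_(t in S_i) c_{t,l} into the number of neighbours of a
   vertex y in the sphere D_i(u), for any u with P u y = l.  The bounds then
   come from moving the base point: if w is a neighbour of u with
   d(w, y) = d(u, y) - 1, the neighbours of y at distance d(u, y) + 1 from u
   all lie at distance d(w, y) + 1 from w, and those at distance d(w, y) - 1
   from w all lie at distance d(u, y) - 1 from u. *)

Section Distance.
Variables (T : finType) (e : rel T).

Lemma reachS n u v : reach e n u v -> reach e n.+1 u v.
Proof. by move=> h /=; rewrite h. Qed.

Lemma reach_step n u x y : reach e n u x -> e x y -> reach e n.+1 u y.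
Proof. by move=> hux exy /=; apply/orP; right; apply/existsP; exists x; rewrite hux. Qed.

Lemma reach_cons n u w v : e u w -> reach e n w v -> reach e n.+1 u v.
Proof.
move=> euw; elim: n v => [|n IH] v /=.
  by move/eqP=> <-; apply/orP; right; apply/existsP; exists u; rewrite eqxx.
case/orP=> [hwv|/existsP [z /andP [hwz ezv]]]; first exact: reachS (IH _ hwv).
exact: reach_step (IH _ hwz) ezv.
Qed.

Lemma distD_reach i u v : distD e i u v -> reach e i u v.
Proof. by case/andP. Qed.

Lemma distD0 u v : distD e 0 u v = (u == v).
Proof. by rewrite /distD andbT. Qed.

Lemma distD1 u v : irreflexive e -> distD e 1 u v = e u v.
Proof.
move=> eirr; rewrite /distD /=; case: eqP => [<-|_] /=; first by rewrite eirr.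
rewrite andbT; apply/existsP/idP => [[w /andP [/eqP <-]]|euv] //.
by exists u; rewrite eqxx.
Qed.

Lemma distD_pred i u v : distD e i.+1 u v -> exists2 w, distD e i u w & e w v.
Proof.
case/andP=> /= /orP [huv|/existsP [w /andP [huw ewv]]] /negP nhuv //.
exists w => //; rewrite /distD huw; case: i huw nhuv => // i _ nhuv.
by apply/negP => huw; apply: nhuv; exact: reach_step huw ewv.
Qed.

Hypothesis esym : symmetric e.

Lemma reach_sym n u v : reach e n u v = reach e n v u.
Proof.
suff sym_impl m x y : reach e m x y -> reach e m y x by apply/idP/idP; apply: sym_impl.
elim: m x y => [|m IH] x y /=; first by rewrite eq_sym.
case/orP=> [hxy|/existsP [w /andP [hxw ewy]]]; first exact: reachS (IH _ _ hxy).
by apply: (reach_cons (w := w)); [rewrite esym | exact: IH].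
Qed.

Lemma distD_sym i u v : distD e i u v = distD e i v u.
Proof. by rewrite /distD reach_sym; case: i => //= i; rewrite reach_sym. Qed.

Lemma distD_succ_nbr i u v : distD e i.+1 u v -> exists2 w, e u w & distD e i w v.
Proof.
rewrite distD_sym => /distD_pred [w hvw ewu].
by exists w; [rewrite esym | rewrite distD_sym].
Qed.

End Distance.

Definition sphere_deg (T : finType) (e : rel T) i (u y : T) : nat :=
  #|[set x | e x y && distD e i u x]|.

Section SphereDegree.
Variables (T : finType) (e : rel T).

Lemma sphere_deg0 u y : e u y -> sphere_deg e 0 u y = 1.
Proof.
move=> euy; rewrite /sphere_deg -(cards1 u); apply: eq_card => x.
by rewrite !inE distD0 eq_sym; case: eqP => [->|]; rewrite ?andbT ?andbF.
Qed.

Hypothesis esym : symmetric e.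

Lemma sphere_deg_pred_pos i u v :
  distD e i.+1 u v -> exists2 w, distD e i u w & 0 < sphere_deg e i.+1 u w.
Proof.
move=> huv; have [w huw ewv] := distD_pred huv.
by exists w => //; apply/card_gt0P; exists v; rewrite inE esym ewv huv.
Qed.

Lemma sphere_deg_le k i u y : k_regular e k -> sphere_deg e i u y <= k.
Proof.
move=> Hk; rewrite -(Hk y); apply/subset_leq_card/subsetP => x.
by rewrite !inE esym => /andP [].
Qed.

Lemma sphere_deg1_self k u :
  irreflexive e -> k_regular e k -> sphere_deg e 1 u u = k.
Proof.
move=> eirr Hk; rewrite -(Hk u); apply: eq_card => x.
by rewrite !inE distD1 // esym andbb.
Qed.

Lemma sphere_deg_shift_out j u w y :
  e u w -> distD e j w y -> sphere_deg e j.+2 u y <= sphere_deg e j.+1 w y.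
Proof.
move=> euw hwy; apply/subset_leq_card/subsetP => x.
rewrite !inE => /andP [exy /andP [_ /negP nhux]]; rewrite exy /=.
apply/andP; split; first by apply: reach_step (distD_reach hwy) _; rewrite esym.
by apply/negP => hwx; apply: nhux; exact: reach_cons euw hwx.
Qed.

Lemma sphere_deg_shift_in n u w y :
  e u w -> distD e n.+2 u y -> sphere_deg e n w y <= sphere_deg e n.+1 u y.
Proof.
move=> euw /andP [_ /negP nhuy]; apply/subset_leq_card/subsetP => x.
rewrite !inE => /andP [exy hwx]; rewrite exy /=.
apply/andP; split; first exact: reach_cons euw (distD_reach hwx).
by apply/negP => hux; apply: nhuy; exact: reach_step hux exy.
Qed.

End SphereDegree.

Lemma sum_card_preim (I J : finType) (p : pred I) (f : I -> J) (A : {set J}) :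
  \sum_(t in A) #|[set x | p x && (f x == t)]| = #|[set x | p x && (f x \in A)]|.
Proof.
rewrite -sum1_card (partition_big f (mem A)) /=; last by move=> x; rewrite inE => /andP [].
apply: eq_bigr => t At; rewrite -sum1_card; apply: eq_bigl => x; rewrite !inE.
by case: eqP => [->|]; rewrite ?andbT ?andbF // At andbT.
Qed.

Lemma bigmin_le (I : finType) (P : pred I) (F : I -> nat) x i0 :
  P i0 -> \big[minn/x]_(i | P i) F i <= F i0.
Proof.
move=> Pi0; have : i0 \in index_enum I := mem_index_enum i0.
elim: (index_enum I) => [|j r IH] //; rewrite big_cons inE => /predU1P [<-|/IH le].
  by rewrite Pi0 geq_minl.
by case: (P j) => //; rewrite geq_min le orbT.
Qed.

Lemma leq_bigmin (I : finType) (P : pred I) (F : I -> nat) x n :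
  n <= x -> (forall i, P i -> n <= F i) -> n <= \big[minn/x]_(i | P i) F i.
Proof.
by move=> nx nF; apply: (big_ind (leq n)) => // a b na nb; rewrite leq_min na nb.
Qed.

Section CollapsedAdjacency.
Variables (T : finType) (e : rel T) (m D : nat).
Variables (c : 'I_m -> 'I_m -> nat) (P : T -> T -> 'I_m) (S : nat -> {set 'I_m}).
Hypothesis Hhr : highly_regular_with e c P.
Hypothesis HSd : forall i (u v : T), i <= D -> distD e i u v = (P u v \in S i).

Lemma sum_cam_sphere_deg i u y :
  i <= D -> \sum_(t in S i) c t (P u y) = sphere_deg e i u y.
Proof.
have [_ _ _ Hc] := Hhr; move=> hi.
rewrite (eq_bigr (fun t => #|[set x | e x y && (P u x == t)]|)) => [|t _]; last by rewrite Hc.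
by rewrite sum_card_preim; apply: eq_card => x; rewrite !inE HSd.
Qed.

Lemma mem_S_distD i u l : i <= D -> l \in S i -> exists2 y, P u y = l & distD e i u y.
Proof.
have [_ _ HPs _] := Hhr; move=> hi hl; have [y Puy] := HPs u l.
by exists y; rewrite // HSd // Puy.
Qed.

Lemma bmax_ge j u y : j < D -> distD e j u y -> sphere_deg e j.+1 u y <= bmax c S j.
Proof.
move=> hj huy; rewrite -sum_cam_sphere_deg //.
by apply: leq_bigmax_cond; rewrite -HSd // ltnW.
Qed.

Lemma bmax_le j u n : j < D ->
  (forall y, distD e j u y -> sphere_deg e j.+1 u y <= n) -> bmax c S j <= n.
Proof.
move=> hj hn; apply/bigmax_leqP => l /(mem_S_distD u (ltnW hj)) [y <- huy].
by rewrite sum_cam_sphere_deg //; exact: hn.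
Qed.

Lemma cmin_le i u y : i <= D -> distD e i u y -> cmin c S i <= sphere_deg e i.-1 u y.
Proof.
move=> hi huy; rewrite -sum_cam_sphere_deg; last exact: leq_trans (leq_pred i) hi.
by apply: bigmin_le; rewrite -HSd.
Qed.

Lemma cmin_ge i u n : i <= D -> S i != set0 ->
  (forall y, distD e i u y -> n <= sphere_deg e i.-1 u y) -> n <= cmin c S i.
Proof.
move=> hi /set0Pn [l0 hl0] hn; have hi1 : i.-1 <= D := leq_trans (leq_pred i) hi.
have hF l : l \in S i -> n <= \sum_(t in S i.-1) c t l.
  by case/(mem_S_distD u hi) => y <- huy; rewrite sum_cam_sphere_deg ?hn.
by apply: leq_bigmin => //; apply: leq_trans (hF _ hl0) (leq_bigmax_cond _ hl0).
Qed.

End CollapsedAdjacency.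

Theorem proposition6p1 (T : finType) (e : rel T) (k m D : nat)
    (c : 'I_m -> 'I_m -> nat) (P : T -> T -> 'I_m) (S : nat -> {set 'I_m}) :
  simple_graph e ->
  connected_graph e ->
  k_regular e k ->
  highly_regular_with e c P ->
  is_diameter e D ->
  1 <= D ->
  (forall i, i <= D -> S i != set0) ->
  (forall i (u v : T), i <= D -> distD e i u v = (P u v \in S i)) ->
  ((bmax c S 0 = k /\
    (forall j, j.+1 < D -> bmax c S j.+1 <= bmax c S j) /\
    1 <= bmax c S D.-1)
   /\
   (cmin c S 1 = 1 /\
    (forall i, 1 <= i -> i < D -> cmin c S i <= cmin c S i.+1) /\
    cmin c S D <= k)).
Proof.
move=> [esym eirr] _ Hk Hhr [_ [u0 [v0 Hu0v0]]] HD HS HSd.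
have sphere_at i : i <= D -> exists y, distD e i u0 y.
  by move=> hi; have /set0Pn [l /(mem_S_distD Hhr HSd u0 hi) [y _ hy]] := HS i hi; exists y.
have [y1 hy1] := sphere_at 1 HD; have [yD hyD] := sphere_at D (leqnn D).
have deg_le := sphere_deg_le esym _ _ _ Hk.
split; split; [|split| |split].
- apply/eqP; rewrite eqn_leq (bmax_le Hhr HSd (u := u0) HD) => [|y _]; last exact: deg_le.
  by rewrite -{1}(sphere_deg1_self esym u0 eirr Hk) (bmax_ge Hhr HSd HD) ?distD0.
- move=> j hj; apply: (bmax_le Hhr HSd (u := u0) hj) => y /(distD_succ_nbr esym) [w euw hwy].
  exact: leq_trans (sphere_deg_shift_out esym euw hwy) (bmax_ge Hhr HSd (ltnW hj) hwy).
- move: Hu0v0; rewrite -(prednK HD) => /(sphere_deg_pred_pos esym) [w hw pos].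
  by apply: leq_trans pos (bmax_ge Hhr HSd _ hw); rewrite prednK.
- have sphere_deg0_at y : distD e 1 u0 y -> sphere_deg e 0 u0 y = 1.
    by rewrite distD1 //; exact: sphere_deg0.
  apply/eqP; rewrite eqn_leq; apply/andP; split.
    by have := cmin_le Hhr HSd HD hy1; rewrite sphere_deg0_at.
  by apply: (cmin_ge Hhr HSd (u := u0) HD (HS 1 HD)) => y /sphere_deg0_at ->.
- move=> [//|n] _ hn; apply: (cmin_ge Hhr HSd (u := u0) hn (HS _ hn)) => y hy.
  have [w euw hwy] := distD_succ_nbr esym hy.
  exact: leq_trans (cmin_le Hhr HSd (ltnW hn) hwy) (sphere_deg_shift_in euw hy).
- exact: leq_trans (cmin_le Hhr HSd (leqnn D) hyD) (deg_le _ _ _).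
Qed.
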